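(* Let $G$ be a hypergraph and suppose that for some positive integers $t$, $k$ and $m$ the (unordered) $t$-tuples of vertices of $G$ can be $k$-colored such that every hyperedge containing at least $m$ vertices contains two differently colored $t$-tuples. Then for every integer $t'>t$ there exists an integer $m'=m'(t')$ such that the $t'$-tuples of vertices of $G$ can be $2$-colored such that every hyperedge containing at least $m'$ vertices contains two differently colored $t'$-tuples.
   Context: A $t$-tuple of vertices is a $t$-element subset of the vertex set; a hyperedge contains a $t$-tuple if the $t$-tuple is a subset of it. *)

From mathcomp Require Export all_boot finmap.
Set Implicit Arguments. Unset Strict Implicit. Unset Printing Implicit Defensive.
Local Open Scope fset_scope.

Definition hypergraph (V : choiceType) := (V -> Prop) -> Prop.

Definition fsub_edge (V : choiceType) (S : {fset V}) (e : V -> Prop) : Prop :=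
  forall x, x \in S -> e x.

Definition edge_has_at_least (V : choiceType) (m : nat) (e : V -> Prop) : Prop :=
  exists S : {fset V}, m <= #|` S| /\ fsub_edge S e.

(* A t-tuple contained in e is a t-element finite subset of e. *)
Definition tuple_in (V : choiceType) (t : nat) (A : {fset V}) (e : V -> Prop) :=
  #|` A| = t /\ fsub_edge A e.

(* c is a k-coloring of the t-tuples (its values on sets of size <> t are
   irrelevant) such that every hyperedge with at least m vertices contains
   two differently colored t-tuples. *)
Definition good_tuple_coloring (V : choiceType) (G : hypergraph V)
    (t k m : nat) (c : {fset V} -> 'I_k) : Prop :=
  forall e, G e -> edge_has_at_least m e ->
    exists A B : {fset V}, tuple_in t A e /\ tuple_in t B e /\ c A <> c B.
Arguments good_tuple_coloring {V} G t k m c.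

From mathcomp Require Import all_boot finmap zify.

(* Colour a t'-set 1 if all of its t-subsets receive the same colour under c,
   and 0 otherwise.  By Ramsey's theorem every large enough hyperedge contains
   a t'-set whose t-subsets are all of one colour.  It also contains two
   t-tuples of different colours; exchanging one vertex at a time turns one
   into the other, so some two consecutive t-tuples of this walk differ in
   colour, and their union has at most t + 1 <= t' vertices.  Any t'-subset of
   the hyperedge containing that union gets colour 0. *)

Set Implicit Arguments.
Unset Strict Implicit.
Unset Printing Implicit Defensive.

Local Open Scope fset_scope.

Section FiniteSets.
Variable V : choiceType.
Implicit Types (A B S T X : {fset V}) (e : V -> Prop).

Lemma fsubset_card_between X S n :
  X `<=` S -> #|` X| <= n <= #|` S| ->
  exists U, [/\ X `<=` U, U `<=` S & #|` U| = n].
Proof.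
move=> XS /andP[Xn nS]; move def_d: (n - #|` X|) => d.
elim: d X XS Xn def_d => [|d IH] X XS Xn def_d; first by exists X; split => //; lia.
have /fsubsetPn[y yS yX] : ~~ (S `<=` X) by apply/negP => /fsubset_leq_card; lia.
have yXS : y |` X `<=` S by rewrite fsubUset fsub1set yS XS.
have card_yX : #|` y |` X| = #|` X|.+1 by rewrite cardfsU1 yX.
have [U [yXU US Un]] := IH (y |` X) yXS ltac:(lia) ltac:(lia).
by exists U; split => //; apply: fsubset_trans yXU; apply: fsubsetUr.
Qed.

Lemma card_eq_fsubsetPn A B :
  #|` A| = #|` B| -> A != B -> exists2 x, x \in A & x \notin B.
Proof.
move=> AB neqAB; apply/fsubsetPn; apply: contra neqAB => sAB.
by rewrite eqEfcard sAB AB leqnn.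
Qed.

Lemma fsub_edge_fsubset X Y e : X `<=` Y -> fsub_edge Y e -> fsub_edge X e.
Proof. by move=> /fsubsetP XY Ye x /XY /Ye. Qed.

Lemma fsub_edgeU X Y e :
  fsub_edge X e -> fsub_edge Y e -> fsub_edge (X `|` Y) e.
Proof. by move=> Xe Ye x /fsetUP[/Xe|/Ye]. Qed.

End FiniteSets.

Section Ramsey.
Variable V : choiceType.

Definition monochromatic (C : Type) t (f : {fset V} -> C) (T : {fset V}) (i : C) :=
  forall A, A `<=` T -> #|` A| = t -> f A = i.

Lemma monochromatic_fset1U (C : Type) t (f : {fset V} -> C) x T1 T2 i :
  x \notin T1 -> T2 `<=` T1 ->
  monochromatic t (fun A => f (x |` A)) T1 i -> monochromatic t.+1 f T2 i ->
  monochromatic t.+1 f (x |` T2) i.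
Proof.
move=> xT1 T21 linkT1 monoT2 A AxT2 At.
have AT2 : A `\ x `<=` T2.
  apply/fsubsetP => y /fsetD1P[yx /(fsubsetP AxT2)] /fset1UP[y_eq_x|//].
  by rewrite y_eq_x eqxx in yx.
have [xA | xA] := boolP (x \in A).
  rewrite -(fsetD1K xA); apply: linkT1; first exact: fsubset_trans AT2 T21.
  by move: At; rewrite (cardfsD1 x) xA; lia.
by apply: monoT2 At; apply: fsubset_trans AT2; rewrite fsubsetD1 fsubset_refl xA.
Qed.

Definition ramsey_bound (C : finType) t (ns : C -> nat) N :=
  forall (S : {fset V}) (f : {fset V} -> C), N <= #|` S| ->
  exists i T, [/\ T `<=` S, #|` T| = ns i & monochromatic t f T i].

Lemma ramsey_bound0 (C : finType) (ns : C -> nat) : ramsey_bound 0 ns (\max_i ns i).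
Proof.
move=> S f maxS; exists (f fset0).
have [|T [_ TS Tn]] := fsubset_card_between (n := ns (f fset0)) (fsub0set S).
  by rewrite cardfs0 /= (leq_trans (leq_bigmax _) maxS).
by exists T; split => // A _ /cardfs0_eq ->.
Qed.

Lemma ramsey_bound_empty (C : finType) t (ns : C -> nat) i :
  ns i = 0 -> ramsey_bound t.+1 ns 0.
Proof.
move=> nsi S f _; exists i, fset0; split; rewrite ?fsub0set ?cardfs0 //.
by move=> A /fsubset_leq_card; rewrite cardfs0 => + At; rewrite At.
Qed.

Definition decr_at (C : eqType) (ns : C -> nat) i j :=
  if j == i then (ns j).-1 else ns j.

Lemma sum_decr_at (C : finType) (ns : C -> nat) i :
  0 < ns i -> (\sum_j decr_at ns i j).+1 = \sum_j ns j.
Proof.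
move=> ns_i; rewrite (bigD1 i) //= [RHS](bigD1 i) //= /decr_at eqxx.
by rewrite (eq_bigr ns) => [|j /negbTE->//]; lia.
Qed.

(* Ramsey for t makes f (x |` A) constant on the t-subsets A of some large
   T1, so x extends every set of that colour found inside T1. *)
Lemma ramsey_bound_pivot (C : finType) t (ns Nf : C -> nat) M :
  (forall i, 0 < ns i) -> (forall i, ramsey_bound t.+1 (decr_at ns i) (Nf i)) ->
  ramsey_bound t (fun _ : C => \max_i Nf i) M -> ramsey_bound t.+1 ns M.+1.
Proof.
move=> ns_pos ramseyNf ramseyM S f MS.
have /fset0Pn[x xS] : S != fset0 by rewrite -cardfs_gt0; lia.
have MSx : M <= #|` S `\ x| by move: MS; rewrite (cardfsD1 x) xS; lia.
have [i [T1 [T1S T1size linkT1]]] := ramseyM _ (fun A => f (x |` A)) MSx.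
have [j [T2 [T21 T2size monoT2]]] := ramseyNf i T1 f ltac:(by rewrite T1size leq_bigmax).
have xT1 : x \notin T1 by move: T1S; rewrite fsubsetD1 => /andP[].
have T2S : T2 `<=` S.
  by apply: (fsubset_trans T21); apply: (fsubset_trans T1S); apply: fsubsetDl.
have [eq_ji | neq_ji] := eqVneq j i; last first.
  by exists j, T2; split => //; rewrite T2size /decr_at (negbTE neq_ji).
subst j; exists i, (x |` T2); split.
- by rewrite fsubUset fsub1set xS T2S.
- rewrite cardfsU1 (contra (fsubsetP T21 x) xT1) T2size /decr_at eqxx.
  by have := ns_pos i; lia.
- exact: monochromatic_fset1U xT1 T21 linkT1 monoT2.
Qed.

Lemma ramsey_boundS (C : finType) t :
  (forall ns : C -> nat, exists N, ramsey_bound t ns N) ->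
  forall ns : C -> nat, exists N, ramsey_bound t.+1 ns N.
Proof.
move=> ramsey_t ns; move sum_ns: (\sum_i ns i) => s.
elim: s ns sum_ns => [|s IH] ns sum_ns.
  exists 0 => S f; apply: (@ramsey_bound_empty _ _ _ (f fset0)).
  by apply/eqP; move/eqP: sum_ns; rewrite sum_nat_eq0 => /forallP/(_ (f fset0)).
case: (pickP (fun i => ns i == 0)) => [i /eqP ns_i0 | ns_pos].
  by exists 0; apply: ramsey_bound_empty ns_i0.
have {}ns_pos i : 0 < ns i by rewrite lt0n ns_pos.
have /fin_all_exists[Nf ramseyNf] i : exists N, ramsey_bound t.+1 (decr_at ns i) N.
  by apply: IH; have := sum_decr_at (ns_pos i); lia.
have [M ramseyM] := ramsey_t (fun _ => \max_i Nf i).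
by exists M.+1; apply: ramsey_bound_pivot ramseyNf ramseyM.
Qed.

Theorem ramsey (C : finType) t (ns : C -> nat) : exists N, ramsey_bound t ns N.
Proof.
elim: t ns => [|t IH] ns; first by exists (\max_i ns i); apply: ramsey_bound0.
exact: ramsey_boundS.
Qed.

End Ramsey.

Section AdjacentTuples.
Variables (V : choiceType) (C : eqType).
Implicit Types (A B : {fset V}) (a b : V).

Lemma fsetU_swap a b A : a \in A -> A `|` (b |` (A `\ a)) = b |` A.
Proof.
move=> aA; apply/fsetP => x; rewrite !inE.
by case: (x \in A); rewrite ?orbT ?andbF ?orbF.
Qed.

Lemma card_swap a b A : a \in A -> b \notin A -> #|` b |` (A `\ a)| = #|` A|.
Proof.
move=> aA bA; rewrite cardfsU1 [RHS](cardfsD1 a) aA inE.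
by rewrite (negbTE bA) andbF.
Qed.

Lemma fsetD_swap a b A B : b \in B -> (b |` (A `\ a)) `\` B = (A `\` B) `\ a.
Proof.
move=> bB; apply/fsetP => x; rewrite !inE.
by case: (eqVneq x b) => [->|_]; rewrite ?bB /= ?andbF // andbCA.
Qed.

Lemma adjacent_tuples (c : {fset V} -> C) t A B :
  #|` A| = t -> #|` B| = t -> c A != c B ->
  exists A1 B1, [/\ A1 `|` B1 `<=` A `|` B, #|` A1| = t, #|` B1| = t,
                    c A1 != c B1 & #|` A1 `|` B1| <= t.+1].
Proof.
move=> + Bt; move: {2}#|` A `\` B| (leqnn #|` A `\` B|) => d.
elim: d A => [|d IH] A dAB At cAB; have neqAB : A != B by apply: contraNneq cAB => ->.
all: have [a aA aB] := card_eq_fsubsetPn (etrans At (esym Bt)) neqAB.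
all: have aAB : a \in A `\` B by apply/fsetDP.
all: have card_AB := cardfsD1 a (A `\` B); rewrite aAB /= in card_AB.
  lia.
have neqBA : B != A by rewrite eq_sym.
have [b bB bA] := card_eq_fsubsetPn (etrans Bt (esym At)) neqBA.
set A' := b |` (A `\ a).
have A't : #|` A'| = t by rewrite card_swap.
have A'AB : A' `<=` A `|` B.
  by rewrite fsubUset fsub1set inE bB orbT (fsubset_trans (fsubsetDl _ _)) ?fsubsetUl.
have [eq_cAA' | neq_cAA'] := eqVneq (c A) (c A'); last first.
  exists A, A'; split => //; first by rewrite fsubUset fsubsetUl.
  by rewrite fsetU_swap // cardfsU1 bA At.
have dA'B : #|` A' `\` B| <= d by rewrite fsetD_swap //; lia.
have cA'B : c A' != c B by rewrite -eq_cAA'.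
have [A1 [B1 [sub A1t B1t cA1B1 card_A1B1]]] := IH A' dA'B A't cA'B.
exists A1, B1; split => //; apply: fsubset_trans sub _.
by rewrite fsubUset A'AB fsubsetUr.
Qed.

End AdjacentTuples.

Section TupleMonochromatic.
Variables (V : choiceType) (C : eqType).
Implicit Types (c : {fset V} -> C) (A B S T : {fset V}).

Definition tuple_monochromatic t c T :=
  all (fun A => all (fun B =>
    (#|` A| == t) ==> (#|` B| == t) ==> (c A == c B)) (fpowerset T)) (fpowerset T).

Lemma tuple_monochromaticP t c T :
  reflect (forall A B, A `<=` T -> B `<=` T -> #|` A| = t -> #|` B| = t -> c A = c B)
          (tuple_monochromatic t c T).
Proof.
apply: (iffP allP) => [mono A B AT BT At Bt | mono A].
  have := mono A; rewrite fpowersetE => /(_ AT) /allP/(_ B).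
  by rewrite fpowersetE At Bt eqxx => /(_ BT) /eqP.
rewrite fpowersetE => AT; apply/allP => B; rewrite fpowersetE => BT.
by apply/implyP => /eqP At; apply/implyP => /eqP Bt; apply/eqP/mono.
Qed.

Lemma monochromatic_tuple_monochromatic t c T i :
  monochromatic t c T i -> tuple_monochromatic t c T.
Proof.
by move=> mono; apply/tuple_monochromaticP => A B AT BT At Bt; rewrite !mono.
Qed.

Lemma exists_polychromatic_tuple c t t' A B S :
  #|` A| = t -> #|` B| = t -> c A != c B -> t < t' <= #|` S| ->
  exists U, [/\ U `<=` A `|` B `|` S, #|` U| = t' & ~~ tuple_monochromatic t c U].
Proof.
move=> At Bt cAB /andP[tt' t'S].
have [A1 [B1 [A1B1_AB A1t B1t cA1B1 card_A1B1]]] := adjacent_tuples At Bt cAB.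
have A1B1_ABS : A1 `|` B1 `<=` A `|` B `|` S.
  exact: fsubset_trans A1B1_AB (fsubsetUl _ _).
have t'_ABS : t' <= #|` A `|` B `|` S|.
  exact: leq_trans t'S (fsubset_leq_card (fsubsetUr _ _)).
have [|U [A1B1_U U_ABS Ut']] := fsubset_card_between A1B1_ABS (n := t').
  by rewrite t'_ABS andbT; lia.
exists U; split => //; apply/negP => /tuple_monochromaticP mono.
move/fsubUsetP: A1B1_U => [A1U B1U].
by move/eqP: cA1B1; apply; apply: mono.
Qed.

End TupleMonochromatic.

Definition ord_of_bool (b : bool) : 'I_2 := @Ordinal 2 b (leq_b1 b).

Lemma ord_of_bool_inj : injective ord_of_bool.
Proof. by move=> [] [] /(congr1 val). Qed.

Theorem proposition3 (V : choiceType) (G : hypergraph V) (t k m : nat) :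
  0 < t -> 0 < k -> 0 < m ->
  (exists c : {fset V} -> 'I_k, good_tuple_coloring G t k m c) ->
  forall t' : nat, t < t' ->
    exists m' : nat, exists c' : {fset V} -> 'I_2,
      good_tuple_coloring G t' 2 m' c'.
Proof.
move=> _ _ _ [c c_good] t' lt_tt'.
have [N ramseyN] := ramsey V t (fun _ : 'I_k => t').
exists (N + m)%N, (fun T => ord_of_bool (tuple_monochromatic t c T)).
move=> e Ge [S [S_size Se]].
have S_m : edge_has_at_least m e by exists S; split => //; lia.
have [A [B [[At Ae] [[Bt Be] cAB]]]] := c_good e Ge S_m.
have [i [T [TS Tt' Tmono]]] := ramseyN S c ltac:(lia).
have t'S : t' <= #|` S| by rewrite -Tt' fsubset_leq_card.
have neq_cAB : c A != c B by apply/eqP.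
have tt'S : t < t' <= #|` S| by rewrite lt_tt' t'S.
have [U [U_ABS Ut' Upoly]] := exists_polychromatic_tuple At Bt neq_cAB tt'S.
exists T, U; split; last split.
- by split => //; apply: fsub_edge_fsubset TS Se.
- split => //; apply: fsub_edge_fsubset U_ABS _.
  exact: fsub_edgeU (fsub_edgeU Ae Be) Se.
- by move/ord_of_bool_inj; rewrite (monochromatic_tuple_monochromatic Tmono) (negbTE Upoly).
Qed.
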